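(* Let $Q,R,F\subseteq\mathcal{P}$, and define $\mu=\gcd\!\left(\dfrac{\xi_{\mathcal{P}}}{TM(\xi_F)},\ TM(\xi_Q),\ TM(\xi_R)\right)$ and $\nu=\dfrac{\xi_Q}{TM(\xi_Q)}\cdot\dfrac{\xi_R}{TM(\xi_R)}\cdot\dfrac{\xi_{F^c}}{TM(\xi_{F^c})}$. Then $\xi_{(Q\cap R)\setminus F}=\xi_{(Q\cap R)\cap F^c}=\mu\cdot\nu$.
   Context: $\mathcal{P}=\{P_1,\ldots,P_n\}$, $F^c=\mathcal{P}\setminus F$; $\varphi:2^{\mathcal{P}}\to\mathbb{F}_2^n$ sends a set to its indicator vector; for $S\subseteq\mathcal{P}$, $\xi_S(Y_1,\ldots,Y_n)=\prod_{i=1}^n(1+Y_i+\varphi(S)_i)$, i.e. $\xi_S=\prod_{i:P_i\in S}Y_i\cdot\prod_{i:P_i\notin S}(1+Y_i)$; in particular $\xi_{\mathcal{P}}=Y_1\cdots Y_n$. $TM(f)$ is the smallest monomial of $f$ in the lexicographic order with $Y_n\prec\cdots\prec Y_1$. The quotient $\xi_S/TM(\xi_S)$ is the polynomial $\prod_{i:P_i\notin S}(1+Y_i)$, and $\xi_{\mathcal{P}}/TM(\xi_F)=\prod_{i:P_i\notin F}Y_i$; the gcd is that of monomials; products and the equality are in the Boolean polynomial ring $\mathbb{F}_2[\bar Y]/\langle Y_i^2-Y_i\rangle$. *)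

(* Boolean polynomial ring F_2[Y_1..Y_n]/<Y_i^2 - Y_i>,
   represented by its canonical multilinear normal forms: a Boolean
   polynomial is the set of its square-free monomials (coefficients in F_2),
   a square-free monomial is the set of variables occurring in it.
   The variable Y_(i+1) is indexed by i : 'I_n; parties P_(i+1) likewise. *)
From mathcomp Require Import all_boot.
Set Implicit Arguments. Unset Strict Implicit. Unset Printing Implicit Defensive.

Section BoolPoly.
Variable n : nat.

Definition bmono := {set 'I_n}.
Definition bpoly := {set bmono}.

Definition bzero : bpoly := set0.
Definition bone : bpoly := [set set0].
Definition bvar (i : 'I_n) : bpoly := [set [set i]].
Definition bmonop (m : bmono) : bpoly := [set m].

Definition badd (p q : bpoly) : bpoly := (p :\: q) :|: (q :\: p).

(* multiplication: Y_i^2 = Y_i, so the product of monomials a, b is a :|: b;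
   the coefficient of m is the parity of the number of such pairs *)
Definition bmul (p q : bpoly) : bpoly :=
  [set m : bmono | odd #|[set ab : bmono * bmono |
      [&& ab.1 \in p, ab.2 \in q & ab.1 :|: ab.2 == m]]|].

Definition bconst (b : bool) : bpoly := if b then bone else bzero.

Definition xi (S : {set 'I_n}) : bpoly :=
  foldr bmul bone
    [seq badd (badd bone (bvar i)) (bconst (i \in S)) | i <- enum 'I_n].

(* lexicographic order with Y_n < ... < Y_1 on square-free monomials:
   m1 < m2 iff at the first variable (smallest index) where they differ,
   the variable occurs in m2 *)
Definition lex_lt (m1 m2 : bmono) : bool :=
  [exists i : 'I_n, [&& i \in m2, i \notin m1 &
     [forall j : 'I_n, (j < i)%N ==> ((j \in m1) == (j \in m2))]]].
Definition lex_le (m1 m2 : bmono) : bool := (m1 == m2) || lex_lt m1 m2.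

(* smallest monomial of f (default set0 for f = 0, where it is undefined) *)
Definition TM (f : bpoly) : bmono :=
  odflt set0 [pick m in f | [forall m' in f, lex_le m m']].

(* exact division of a polynomial by a monomial dividing each of its terms *)
Definition bdivm (f : bpoly) (m : bmono) : bpoly := [set t :\: m | t in f].

(* gcd of (polynomials that are) monomials *)
Definition bgcd (p q : bpoly) : bpoly := [set a :&: b | a in p, b in q].

End BoolPoly.

From mathcomp Require Import all_boot.
Set Implicit Arguments. Unset Strict Implicit. Unset Printing Implicit Defensive.

(* In multilinear normal form, xi_S is the sum of all monomials containing S,
   i.e. Y^S * prod_(i notin S) (1 + Y_i).  Hence TM(xi_S) = Y^S and
   xi_S / TM(xi_S) = prod_(i notin S) (1 + Y_i).  As (1 + Y_i)^2 = 1 + Y_i,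
   nu = prod_(i notin M) (1 + Y_i) for M = Q :&: R :&: ~: F, while mu = Y^M;
   their product is again the sum of all monomials containing M, i.e. xi_M. *)

Lemma odd_card_involution (T : finType) (X : {set T}) (f : T -> T) :
  {in X, forall x, f x \in X} -> {in X, involutive f} ->
  odd #|X| = odd #|[set x in X | f x == x]|.
Proof.
have [k] := ubnP #|X|; elim: k X => // k IH X ltXk fX fK.
case: (pickP [pred x in X | f x != x]) => [x /andP[xX fxx] | fixed]; last first.
  congr (odd _); apply: eq_card => x; rewrite !inE.
  by case xX: (x \in X) => //=; move: (fixed x); rewrite /= xX => /negbFE ->.
have fxX : f x \in X :\ x by rewrite !inE fxx fX.
set Y := X :\ x :\ f x.
have cardX : #|X| = #|Y|.+2 by rewrite (cardsD1 x X) xX (cardsD1 (f x)) fxX.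
have fixY : [set y in Y | f y == y] = [set y in X | f y == y].
  apply/setP=> y; rewrite !inE.
  case: (eqVneq (f y) y) => fy; rewrite ?andbF ?andbT //.
  case yX: (y \in X); rewrite ?andbF //= andbT.
  apply/andP; split; apply: contra_neq fxx => eq_y; last by rewrite -eq_y fy.
  by rewrite -(fK x xX) -eq_y fy.
rewrite cardX /= negbK -fixY; apply: IH => [|y|y].
- by move: ltXk; rewrite cardX => /ltnW.
- rewrite !inE => /and3P[yfx yx yX]; rewrite fX // andbT.
  apply/andP; split; [apply: contra_neq yx | apply: contra_neq yfx] => eq_fy.
    by rewrite -(fK y yX) eq_fy fK.
  by rewrite -(fK y yX) eq_fy.
- by rewrite !inE => /and3P[_ _ /fK].
Qed.

Section BooleanPolynomials.
Variable n : nat.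
Implicit Types (p q : bpoly n) (a b m A B I L H : bmono n) (S : {set 'I_n}).

(* For L \subset H, [bbox L H] is Y^L * prod_(i in H :\: L) (1 + Y_i). *)
Definition bbox L H : bpoly n :=
  [set m : bmono n | (L \subset m) && (m \subset H)].

Lemma mem_bmul_split p q I :
    {in p, forall a, a \subset I} -> {in q, forall b, [disjoint b & I]} ->
  forall m, (m \in bmul p q) = (m :&: I \in p) && (m :\: I \in q).
Proof.
move=> pI qI m; rewrite inE.
set pairs := [set ab | _].
suff -> : pairs = if (m :&: I \in p) && (m :\: I \in q)
                  then [set (m :&: I, m :\: I)] else set0.
  by case: ifP; rewrite ?cards1 ?cards0.
apply/setP => -[a b]; rewrite !inE /=; apply/idP/idP.
- case/and3P=> ap bq /eqP <-.
  have aI : a :\: I = set0 by apply/eqP; rewrite setD_eq0 pI.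
  rewrite setIUl setDUl aI (setIidPl (pI a ap)) (disjoint_setI0 (qI b bq)).
  by rewrite (setDidPl (qI b bq)) setU0 set0U ap bq inE.
- case: ifP => [/andP[pmI qmI]|]; rewrite ?inE // => /eqP[-> ->].
  by rewrite pmI qmI setID eqxx.
Qed.

Lemma bmul_box_disjoint L1 H1 L2 H2 :
    L1 \subset H1 -> L2 \subset H2 -> [disjoint H1 & H2] ->
  bmul (bbox L1 H1) (bbox L2 H2) = bbox (L1 :|: L2) (H1 :|: H2).
Proof.
move=> LH1 LH2 dH12.
have boxH1 : {in bbox L1 H1, forall a, a \subset H1}.
  by move=> a; rewrite inE => /andP[].
have boxH2 : {in bbox L2 H2, forall b, [disjoint b & H1]}.
  by move=> b; rewrite inE => /andP[_ /disjointWl]; apply; rewrite disjoint_sym.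
apply/setP => m; rewrite (mem_bmul_split boxH1 boxH2) !inE.
have dL2H1 : [disjoint L2 & H1] by rewrite (disjointWl LH2) // disjoint_sym.
by rewrite subsetIr subsetI subsetD subDset subUset LH1 dL2H1 !andbT andbA.
Qed.

(* Decides a propositional identity between memberships of [x], after
   specialising every hypothesis at [x]. *)
Ltac mem_tauto x :=
  repeat match goal with H : _ |- _ => move: (H x); clear H end;
  rewrite /= ?inE;
  repeat match goal with |- context [?y \in ?s] => case: (y \in s) end;
  simpl; unfold is_true; intuition congruence.

Definition swap_on K (ab : bmono n * bmono n) : bmono n * bmono n :=
  ((ab.1 :\: K) :|: (ab.2 :&: K), (ab.2 :\: K) :|: (ab.1 :&: K)).

(* Exchanging the parts of a and b inside m :&: A :&: B is an involution on the
   pairs (a, b) with a :|: b = m, whose only fixed point is (m :&: A, m :&: B);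
   so every m \subset A :|: B arises an odd number of times. *)
Lemma bmul_box0 A B : bmul (bbox set0 A) (bbox set0 B) = bbox set0 (A :|: B).
Proof.
apply/setP => m; rewrite [in RHS]inE sub0set [in LHS]inE.
set pairs := [set ab | _].
have [mAB|mAB] := boolP (m \subset A :|: B); last first.
  suff -> : pairs = set0 by rewrite cards0.
  apply/setP => -[a b]; rewrite !inE !sub0set /=.
  by apply: contraNF mAB => /and3P[aA bB /eqP <-]; apply: setUSS.
move/subsetP: mAB => mAB.
rewrite (@odd_card_involution _ pairs (swap_on (m :&: A :&: B)))
  => [|[a b]|[a b] _].
- suff -> : [set ab in pairs | swap_on (m :&: A :&: B) ab == ab] =
            [set (m :&: A, m :&: B)] by rewrite cards1.
  apply/setP => -[a b]; rewrite !inE !sub0set /= xpair_eqE; apply/idP/idP.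
  + case/andP=> /and3P[/subsetP aA /subsetP bB /eqP/setP mE].
    case/andP=> /eqP/setP e1 /eqP/setP e2.
    by apply/andP; split; apply/eqP/setP => x; mem_tauto x.
  + case/eqP=> -> ->; rewrite !subsetIr.
    by apply/and3P; split; apply/eqP/setP => x; mem_tauto x.
- rewrite !inE !sub0set /= => /and3P[/subsetP aA /subsetP bB /eqP/setP mE].
  by apply/and3P; split; [apply/subsetP => x..|apply/eqP/setP => x]; mem_tauto x.
- by congr pair; apply/setP => x; mem_tauto x.
Qed.

Lemma xi_factor_box S i :
  badd (badd (bone n) (bvar i)) (bconst n (i \in S)) =
  bbox (S :&: [set i]) [set i].
Proof.
have i_neq0 : [set i] != set0 :> bmono n by apply/set0Pn; exists i; rewrite inE.
apply/setP => m; rewrite [in RHS]inE subset1 /badd /bconst /bone /bvar.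
case iS: (i \in S).
- rewrite (setIidPr _) ?sub1set // !inE.
  have [->|_] := eqVneq m [set i]; first by rewrite (negbTE i_neq0) set11.
  by have [->|] := eqVneq m set0; rewrite ?in_set0 ?andbF.
- rewrite (_ : S :&: [set i] = set0) ?sub0set ?inE; last first.
    by apply/disjoint_setI0; rewrite disjoint_sym disjoints1 iS.
  have [->|] := eqVneq m [set i]; rewrite ?eqxx ?(negbTE i_neq0) ?orbF //.
  by case: (m == set0).
Qed.

Lemma foldr_xi_factors S (s : seq 'I_n) : uniq s ->
  foldr (@bmul n) (bone n)
        [seq badd (badd (bone n) (bvar i)) (bconst n (i \in S)) | i <- s] =
  bbox (S :&: [set x in s]) [set x in s].
Proof.
elim: s => [|i s IH] /=.
  rewrite (_ : [set x in [::]] = set0); last by apply/setP => x; rewrite !inE.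
  by move=> _; apply/setP => m; rewrite !inE setI0 sub0set subset0.
case/andP=> i_notin_s uniq_s; rewrite IH // xi_factor_box bmul_box_disjoint.
- congr bbox; last by apply/setP => x; rewrite !inE.
  by rewrite -setIUr; congr (_ :&: _); apply/setP => x; rewrite !inE.
- exact: subsetIr.
- exact: subsetIr.
- by rewrite disjoints1 inE.
Qed.

Lemma xi_box S : xi S = bbox S setT.
Proof.
rewrite /xi foldr_xi_factors ?enum_uniq //.
rewrite (_ : [set x in enum 'I_n] = setT) ?setIT //.
by apply/setP => x; rewrite !inE mem_enum.
Qed.

Lemma subset_lex_le m1 m2 : m1 \subset m2 -> lex_le m1 m2.
Proof.
move=> sub12; rewrite /lex_le; have [//|ne12] := eqVneq m1 m2.
have : m2 :\: m1 != set0.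
  by rewrite setD_eq0; apply: contra ne12 => sub21; rewrite eqEsubset sub12.
case/set0Pn => i0 /(arg_minnP (fun i : 'I_n => val i))[i /setDP[i2 i1] min_i].
apply/existsP; exists i; rewrite i2 i1; apply/forallP => j; apply/implyP => lt_ji.
case j1: (j \in m1); first by rewrite (subsetP sub12).
rewrite eq_sym eqbF_neg; apply: contraTN lt_ji => j2; rewrite -leqNgt.
by apply: min_i; apply/setDP; rewrite j1.
Qed.

Lemma TM_least (f : bpoly n) L :
  L \in f -> {in f, forall m, L \subset m} -> TM f = L.
Proof.
move=> Lf L_least; rewrite /TM.
case: pickP => [m /andP[mf /forall_inP m_min] | no_min].
  apply/eqP; rewrite eqEsubset L_least // andbT.
  have /orP[/eqP-> //|/existsP[i /and3P[iL i_notin_m _]]] := m_min L Lf.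
  by rewrite (subsetP (L_least m mf)) in i_notin_m.
have := no_min L; rewrite Lf /=; move/negbT/forall_inP; case => m mf.
exact/subset_lex_le/L_least.
Qed.

Lemma TM_xi S : TM (xi S) = S.
Proof.
by rewrite xi_box; apply: TM_least => [|m]; rewrite inE ?subxx ?subsetT // andbT.
Qed.

Lemma bdivm_box L H : L \subset H -> bdivm (bbox L H) L = bbox set0 (H :\: L).
Proof.
move=> LH; apply/setP => m; rewrite [in RHS]inE sub0set /=; apply/imsetP/idP.
  by case=> t; rewrite inE => /andP[_ tH] ->; apply: setSD.
rewrite subsetD => /andP[mH mL]; exists (m :|: L).
  by rewrite inE subsetUr subUset mH LH.
by rewrite setDUl setDv setU0 (setDidPl mL).
Qed.

Lemma bbox_set1 m : bbox m m = [set m].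
Proof. by apply/setP => m'; rewrite !inE eq_sym eqEsubset. Qed.

Lemma bgcd_set1 a b : bgcd [set a] [set b] = [set a :&: b].
Proof. by rewrite /bgcd imset2_set1l imset_set1. Qed.
End BooleanPolynomials.

Theorem mainTheorem17 (n : nat) (Q R F : {set 'I_n}) :
  let mu := bgcd (bgcd (bdivm (xi [set: 'I_n]) (TM (xi F)))
                       (bmonop (TM (xi Q))))
                 (bmonop (TM (xi R))) in
  let nu := bmul (bmul (bdivm (xi Q) (TM (xi Q)))
                       (bdivm (xi R) (TM (xi R))))
                 (bdivm (xi (~: F)) (TM (xi (~: F)))) in
  xi ((Q :&: R) :\: F) = xi ((Q :&: R) :&: ~: F) /\
  xi ((Q :&: R) :&: ~: F) = bmul mu nu.
Proof.
move=> mu nu; split; first by rewrite setDE.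
set M := Q :&: R :&: ~: F.
have -> : mu = [set M].
  rewrite /mu !TM_xi xi_box bbox_set1 /bdivm imset_set1 /bmonop !bgcd_set1.
  by rewrite setTD -setIA setIC.
have -> : nu = bbox set0 (~: M).
  rewrite /nu !TM_xi !xi_box !bdivm_box ?subsetT // !setTD !bmul_box0.
  by rewrite !setCI setCK.
rewrite -bbox_set1 xi_box bmul_box_disjoint ?sub0set ?subxx ?setU0 ?setUCr //.
by rewrite disjoints_subset setCK.
Qed.
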